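(* Let $n\ge 2$, $F$ the free group on $g_1,\dots,g_n$, $F^{(1)}=[F,F]$, $F^{(2)}=[F^{(1)},F^{(1)}]$, $\Lambda_n=\mathbb{Z}[t_1,t_1^{-1},\dots,t_n,t_n^{-1}]$, and let $\mu_1:F\to \mathrm{SL}(2,\Lambda_n)$ be the group homomorphism with $\mu_1(g_i)=\begin{bmatrix} t_i&0\\ 1&t_i^{-1}\end{bmatrix}$ for $1\le i\le n$. Let $w\in F^{(1)}\setminus F^{(2)}$. Then there exists a nonzero Laurent polynomial $\mathcal{L}_w\in\Lambda_n$ such that $$\mu_1(w)=\begin{bmatrix} 1&0\\ \mathcal{L}_w&1\end{bmatrix}.$$ *)

From HB Require Import structures.
From mathcomp Require Import all_boot all_order all_algebra.
From mathcomp Require Import fraction.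
From mathcomp Require Import mpoly.

Set Implicit Arguments.
Unset Strict Implicit.
Unset Printing Implicit Defensive.

Import GRing.Theory.
Local Open Scope ring_scope.

(* The free group F on g_1, ..., g_n, as reduced words.                *)
(* A letter (i, false) stands for g_i, (i, true) for g_i^{-1}.          *)
Definition letter (n : nat) := ('I_n * bool)%type.

Definition linv n (x : letter n) : letter n := (x.1, ~~ x.2).

Definition reduced n (w : seq (letter n)) : bool :=
  sorted (fun x y => y != linv x) w.

Definition reduce n (w : seq (letter n)) : seq (letter n) :=
  foldr (fun x s => if s is y :: s' then (if y == linv x then s' else x :: s)
                    else [:: x]) [::] w.

Definition fmul n (u v : seq (letter n)) := reduce (u ++ v).
Definition finv n (u : seq (letter n)) := rev (map (@linv n) u).
Definition fcomm n (u v : seq (letter n)) :=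
  fmul (fmul (finv u) (finv v)) (fmul u v).

Inductive fgen n (S : seq (letter n) -> Prop) : seq (letter n) -> Prop :=
| fgen_base w : S w -> fgen S w
| fgen_one : fgen S [::]
| fgen_mul u v : fgen S u -> fgen S v -> fgen S (fmul u v)
| fgen_inv u : fgen S u -> fgen S (finv u).

Definition fderived n (H : seq (letter n) -> Prop) : seq (letter n) -> Prop :=
  fgen (fun w => exists u v, H u /\ H v /\ w = fcomm u v).

Definition Fgrp n : seq (letter n) -> Prop := fun w => reduced w.
Definition F1 n := fderived (@Fgrp n).
Definition F2 n := fderived (@F1 n).

(* Lambda_n = Z[t_1^{+-1}, ..., t_n^{+-1}], realized inside the field  *)
(* of fractions of Z[t_1, ..., t_n] as the ring of fractions p / m     *)
(* with m a power of t_1 ... t_n.                                      *)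
Definition Frac n := {fraction {mpoly int[n]}}.

Definition tofr n (p : {mpoly int[n]}) : Frac n := @FracField.tofrac _ p.

Definition tvar n (i : 'I_n) : Frac n := tofr 'X_i.

Definition laurent n (L : Frac n) : Prop :=
  exists (p : {mpoly int[n]}) (k : nat),
    L * (\prod_(i < n) tvar i) ^+ k = tofr p.

Definition mu1_gen n (i : 'I_n) : 'M[Frac n]_2 :=
  \matrix_(a < 2, b < 2)
    (if (a == 0) && (b == 0) then tvar i
     else if (a == 1) && (b == 0) then 1
     else if (a == 0) && (b == 1) then 0
     else (tvar i)^-1).

Definition mu1_letter n (x : letter n) : 'M[Frac n]_2 :=
  if x.2 then invmx (mu1_gen x.1) else mu1_gen x.1.

Definition mu1 n (w : seq (letter n)) : 'M[Frac n]_2 :=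
  foldr (fun x M => mu1_letter x *m M) 1%:M w.

Definition lower_unip n (L : Frac n) : 'M[Frac n]_2 :=
  \matrix_(a < 2, b < 2) (if a == b then 1 else if (a == 1) && (b == 0) then L else 0).

(* Reading a word letter by letter traces a path in the Cayley graph of Z^n, the
   abelianization of F.  By induction on the word, mu_1(w) is lower triangular with
   diagonal (t^e, t^-e), e the exponent sum of w, and its lower-left entry is, up to a
   monomial factor, a signed sum of Laurent monomials, one for each crossed lattice edge,
   distinct edges giving distinct monomials.  For w in F^(1) the path is closed, so
   mu_1(w) is unipotent and the entry is a Laurent polynomial L_w.  If L_w = 0, every edge
   is crossed as often forwards as backwards.  Now w is the product, in the order of the
   path, of the edge elements gamma_p g_i gamma_(p+e_i)^-1 of F^(1); modulo F^(2) these
   commute, so a product in which each of them has net exponent zero lies in F^(2). *)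

From Pilot Require Import Defs.
From mathcomp Require Import all_boot all_order all_algebra.
From mathcomp Require Import fraction.
From mathcomp Require Import mpoly.
From mathcomp Require Import ring zify.
From Stdlib Require Import Setoid.
(* Re-import so that [finv] denotes the free-group inverse, not [fingraph.finv]. *)
Import Defs.

Set Implicit Arguments.
Unset Strict Implicit.
Unset Printing Implicit Defensive.

Import GRing.Theory Num.Theory.
Local Open Scope ring_scope.

Section FreeReduction.
Variable n : nat.
Implicit Types (x y : letter n) (s u v w : seq (letter n)).

Definition reduce_step x s : seq (letter n) :=
  if s is y :: s' then (if y == linv x then s' else x :: s) else [:: x].

Lemma reduceE w : reduce w = foldr reduce_step [::] w.
Proof. by []. Qed.

Lemma linvK : involutive (@linv n).
Proof. by case=> i b; rewrite /linv /= negbK. Qed.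

Lemma reduced_cons x s :
  reduced (x :: s) = (if s is y :: _ then y != linv x else true) && reduced s.
Proof. by case: s. Qed.

Lemma reduced_step x s : reduced s -> reduced (reduce_step x s).
Proof.
case: s => [|y s] // Hs; rewrite [reduce_step _ _]/=; case: ifP => [_|Hy].
  by move: Hs; rewrite reduced_cons => /andP[].
by rewrite reduced_cons Hy.
Qed.

Lemma reduced_foldr s u : reduced s -> reduced (foldr reduce_step s u).
Proof. by move=> Hs; elim: u => //= x u IH; apply: reduced_step. Qed.

Lemma reduced_reduce w : reduced (reduce w).
Proof. exact: reduced_foldr. Qed.

Lemma reduce_stepK x s : reduced s -> reduce_step x (reduce_step (linv x) s) = s.
Proof.
case: s => [|y s]; first by rewrite /= eqxx.
rewrite [reduce_step _ (_ :: _)]/= linvK; case: eqP => [->|Hy] Hs; last by rewrite /= eqxx.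
by move: Hs; rewrite reduced_cons; case: s => [|z s] //= /andP[/negbTE ->].
Qed.

Lemma foldr_step_reduce s u :
  reduced s -> foldr reduce_step s u = foldr reduce_step s (reduce u).
Proof.
move=> Hs; elim: u => //= x u ->.
case: (reduce u) => [|y r] //=; case: ifP => //= /eqP ->.
by rewrite reduce_stepK // reduced_foldr.
Qed.

Lemma reduce_id w : reduced w -> reduce w = w.
Proof.
elim: w => // x w IH; rewrite reduced_cons => /andP[Hx Hw].
rewrite reduceE /= -reduceE IH //.
by case: w Hx {IH Hw} => [|y w] //= /negbTE ->.
Qed.

Lemma reduce_reduce w : reduce (reduce w) = reduce w.
Proof. exact/reduce_id/reduced_reduce. Qed.

Lemma reduce_cat u v : reduce (u ++ v) = foldr reduce_step (reduce v) u.
Proof. by rewrite /reduce foldr_cat. Qed.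

Lemma reduce_catl u v : reduce (reduce u ++ v) = reduce (u ++ v).
Proof. by rewrite !reduce_cat [RHS]foldr_step_reduce // reduced_reduce. Qed.

Lemma reduce_catr u v : reduce (u ++ reduce v) = reduce (u ++ v).
Proof. by rewrite !reduce_cat reduce_reduce. Qed.

Lemma reduce_mid u v w : reduce (u ++ reduce v ++ w) = reduce (u ++ v ++ w).
Proof. by rewrite -reduce_catr reduce_catl reduce_catr. Qed.

Lemma finv_cons x u : finv (x :: u) = finv u ++ [:: linv x].
Proof. by rewrite /finv /= rev_cons cats1. Qed.

Lemma finv_cat u v : finv (u ++ v) = finv v ++ finv u.
Proof. by rewrite /finv map_cat rev_cat. Qed.

Lemma finvK : involutive (@finv n).
Proof. by move=> u; rewrite /finv map_rev revK -map_comp (eq_map linvK) map_id. Qed.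

Lemma reduce_catV u : reduce (u ++ finv u) = [::].
Proof.
elim: u => //= x u IH.
by rewrite -/(reduce _) finv_cons catA -reduce_catl IH /= eqxx.
Qed.

Lemma reduce_Vcat u : reduce (finv u ++ u) = [::].
Proof. by rewrite -{2}(finvK u) reduce_catV. Qed.

Lemma reduced_finv u : reduced u -> reduced (finv u).
Proof.
rewrite /reduced /finv rev_sorted sorted_map; apply: sub_sorted => x y /=.
by apply: contra => /eqP ->; rewrite linvK.
Qed.

Lemma reduce_finv u : reduce (finv u) = finv (reduce u).
Proof.
have red0 : reduce (u ++ finv (reduce u)) = [::] by rewrite -reduce_catl reduce_catV.
rewrite -[finv u]cats0 -red0 reduce_catr catA -reduce_catl reduce_Vcat /=.
exact/reduce_id/reduced_finv/reduced_reduce.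
Qed.

End FreeReduction.

Definition weq n (u v : seq (letter n)) := reduce u = reduce v.

Lemma weq_equiv n : Equivalence (@weq n).
Proof. by split; rewrite /weq => // x y z ->. Qed.

Add Parametric Relation n : (seq (letter n)) (@weq n)
  reflexivity proved by (@Equivalence_Reflexive _ _ (@weq_equiv n))
  symmetry proved by (@Equivalence_Symmetric _ _ (@weq_equiv n))
  transitivity proved by (@Equivalence_Transitive _ _ (@weq_equiv n))
  as weq_rel.

Lemma weq_cat n (u u' v v' : seq (letter n)) :
  weq u u' -> weq v v' -> weq (u ++ v) (u' ++ v').
Proof.
rewrite /weq => Hu Hv.
by rewrite -reduce_catl Hu reduce_catl -reduce_catr Hv reduce_catr.
Qed.

Add Parametric Morphism n : (@cat (letter n))
  with signature (@weq n) ==> (@weq n) ==> (@weq n) as cat_weq.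
Proof. by move=> *; apply: weq_cat. Qed.

Add Parametric Morphism n (x : letter n) : (cons x)
  with signature (@weq n) ==> (@weq n) as cons_weq.
Proof. by move=> u v uv; exact: (@weq_cat n [:: x] [:: x] u v erefl uv). Qed.

Section Subgroups.
Variable n : nat.
Implicit Types (S : seq (letter n) -> Prop) (a b c u v w z : seq (letter n)).

Lemma weq_Vcat u c : weq (finv u ++ u ++ c) c.
Proof. by rewrite /weq catA -reduce_catl reduce_Vcat. Qed.

Lemma weq_catV u c : weq (u ++ finv u ++ c) c.
Proof. by rewrite /weq catA -reduce_catl reduce_catV. Qed.

Definition ingen S w := fgen S (reduce w).

Lemma ingen_weq S u v : weq u v -> ingen S u -> ingen S v.
Proof. by rewrite /ingen => ->. Qed.

Lemma ingen_nil S : ingen S [::].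
Proof. exact: fgen_one. Qed.

Lemma ingen_cat S u v : ingen S u -> ingen S v -> ingen S (u ++ v).
Proof. by move=> Hu Hv; have := fgen_mul Hu Hv; rewrite /fmul reduce_catl reduce_catr. Qed.

Lemma ingen_finv S u : ingen S u -> ingen S (finv u).
Proof. by move=> Hu; rewrite /ingen reduce_finv; apply: fgen_inv. Qed.

Lemma ingen_reduced S w : reduced w -> ingen S w = fgen S w.
Proof. by move=> Hw; rewrite /ingen reduce_id. Qed.

Lemma ingen_conj S :
  (forall w z, S w -> ingen S (z ++ w ++ finv z)) ->
  forall w z, ingen S w -> ingen S (z ++ w ++ finv z).
Proof.
move=> S_conj w z Sw.
apply: (@ingen_weq _ (z ++ reduce w ++ finv z)); first by rewrite /weq reduce_mid.
rewrite /ingen in Sw; move: (reduce w) Sw z => {}w Sw.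
elim: Sw => [w' Sw'||u v _ IHu _ IHv|u _ IH] z.
- exact: S_conj.
- by apply: (@ingen_weq _ [::]); [rewrite /weq /= reduce_catV | exact: ingen_nil].
- apply: ingen_weq (ingen_cat (IHu z) (IHv z)).
  by rewrite -!catA weq_Vcat /weq /fmul reduce_mid -catA.
- apply: ingen_weq (ingen_finv (IH z)).
  by rewrite !finv_cat finvK catA.
Qed.

Definition commw u v := finv u ++ finv v ++ u ++ v.

Lemma reduce_commw u v : reduce (commw u v) = fcomm (reduce u) (reduce v).
Proof.
rewrite /fcomm /fmul reduce_catl reduce_catr -catA -!reduce_finv.
rewrite reduce_catl reduce_mid [finv u ++ _]catA reduce_mid catA reduce_catr.
by rewrite /commw !catA.
Qed.

Lemma weq_commw_conj a b z :
  weq (z ++ commw a b ++ finv z) (commw (z ++ a ++ finv z) (z ++ b ++ finv z)).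
Proof. by rewrite /commw !finv_cat !finvK -!catA !weq_Vcat. Qed.

End Subgroups.

Definition signz (b : bool) : int := if b then -1 else 1.

(* [s] encodes the product of the words [X k]^(+-1), sign [true] meaning inverse. *)
Definition wpow n (K : Type) (X : K -> seq (letter n)) (e : K * bool) :=
  if e.2 then finv (X e.1) else X e.1.
Definition wprod n (K : Type) (X : K -> seq (letter n)) (s : seq (K * bool)) :=
  flatten (map (wpow X) s).
Definition netcount (K : eqType) (k : K) (s : seq (K * bool)) : int :=
  \sum_(e <- s | e.1 == k) signz e.2.

Lemma wprod_cons n (K : Type) (X : K -> seq (letter n)) e s :
  wprod X (e :: s) = wpow X e ++ wprod X s.
Proof. by []. Qed.

Lemma wprod_cat n (K : Type) (X : K -> seq (letter n)) s1 s2 :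
  wprod X (s1 ++ s2) = wprod X s1 ++ wprod X s2.
Proof. by rewrite /wprod map_cat flatten_cat. Qed.

Lemma netcount_cons (K : eqType) (k : K) e s :
  netcount k (e :: s) = (if e.1 == k then signz e.2 else 0) + netcount k s.
Proof. by rewrite /netcount big_cons; case: ifP; rewrite ?add0r. Qed.

Lemma netcount_cat (K : eqType) (k : K) s1 s2 :
  netcount k (s1 ++ s2) = netcount k s1 + netcount k s2.
Proof. by rewrite /netcount big_cat. Qed.

Lemma netcount_cons_eq0 (K : eqType) (k : K) b s :
  netcount k ((k, b) :: s) = 0 -> (k, ~~ b) \in s.
Proof.
apply: contraPT => /negP notin; rewrite netcount_cons eqxx /=.
have same_sign e : e \in s -> e.1 == k -> e.2 = b.
  case: e => k' b' /= es /eqP Ek; subst k'.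
  by case: b b' notin es => [] [] // /negP.
rewrite /netcount big_seq_cond.
set S := \sum_(_ <- _ | _) _.
case: b same_sign {notin} => same_sign /=.
- suff : S <= 0 by lia.
  by apply: sumr_le0 => e /andP[es ek]; rewrite (same_sign e es ek).
- suff : 0 <= S by lia.
  by apply: sumr_ge0 => e /andP[es ek]; rewrite (same_sign e es ek).
Qed.

Definition comms n (H : seq (letter n) -> Prop) (w : seq (letter n)) :=
  exists u v, H u /\ H v /\ w = fcomm u v.

(* On reduced words, [inder H] is [fderived H]. *)
Definition inder n (H : seq (letter n) -> Prop) := ingen (comms H).

Section DerivedSubgroup.
Variables (n : nat) (H : seq (letter n) -> Prop).
Implicit Types (a b u v w z : seq (letter n)).

Hypothesis H_reduced : forall w, H w -> reduced w.
Hypothesis H_one : H [::].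
Hypothesis H_mul : forall u v, H u -> H v -> H (fmul u v).
Hypothesis H_inv : forall u, H u -> H (finv u).
Hypothesis H_conj : forall u z, H u -> H (reduce (z ++ u ++ finv z)).

Lemma inder_commw a b : H (reduce a) -> H (reduce b) -> inder H (commw a b).
Proof.
move=> Ha Hb; rewrite /inder /ingen reduce_commw.
by apply: fgen_base; exists (reduce a), (reduce b).
Qed.

Lemma inder_conj w z : inder H w -> inder H (z ++ w ++ finv z).
Proof.
apply: ingen_conj => {}w {}z [u [v [Hu [Hv ->]]]].
apply: (@ingen_weq _ _ (commw (z ++ u ++ finv z) (z ++ v ++ finv z))); last first.
  by apply: inder_commw; apply: H_conj.
have -> : fcomm u v = reduce (commw u v) by rewrite reduce_commw !reduce_id ?H_reduced.
by rewrite -weq_commw_conj /weq reduce_mid.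
Qed.

Lemma inder_swap u v z1 z2 : H (reduce u) -> H (reduce v) ->
  inder H (z1 ++ u ++ v ++ z2) -> inder H (z1 ++ v ++ u ++ z2).
Proof.
move=> Hu Hv Huv.
have Hvu : inder H (z1 ++ commw (finv v) (finv u) ++ finv z1).
  by apply/inder_conj/inder_commw; rewrite reduce_finv; apply: H_inv.
apply: ingen_weq (ingen_cat Hvu Huv).
by rewrite /commw !finvK -!catA !weq_Vcat.
Qed.

Variables (K : eqType) (X : K -> seq (letter n)).
Hypothesis HX : forall k, H (reduce (X k)).

Lemma H_wpow e : H (reduce (wpow X e)).
Proof. by rewrite /wpow; case: e.2; rewrite ?reduce_finv; [apply: H_inv |]; apply: HX. Qed.

Lemma H_wprod s : H (reduce (wprod X s)).
Proof.
elim: s => [|e s IH] //=.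
by have := H_mul (H_wpow e) IH; rewrite /fmul reduce_catl reduce_catr.
Qed.

(* Commute the first factor up to a factor of opposite sign, cancel both, and recurse. *)
Lemma inder_wprod s : (forall k, netcount k s = 0) -> inder H (wprod X s).
Proof.
move: {2}(size s) (leqnn (size s)) => m.
elim: m s => [|m IH] [|[k b] s] //= size_s net0; try exact: ingen_nil.
have kin := netcount_cons_eq0 (net0 k).
case/splitPr: kin net0 size_s => A C net0 size_s.
rewrite wprod_cons wprod_cat wprod_cons.
apply: (@inder_swap _ _ [::]); [exact: H_wprod | exact: H_wpow |].
apply: (@ingen_weq _ _ (wprod X (A ++ C))).
  by rewrite wprod_cat /wpow /=; case: (b); rewrite /= ?weq_Vcat ?weq_catV.
apply: IH => [|j]; first by move: size_s; rewrite !size_cat /= addnS ltnS => /ltnW.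
move: (net0 j); rewrite !netcount_cons netcount_cat netcount_cons netcount_cat /=.
by case: (k == j); rewrite /= ?add0r //; case: (b) => /=; lia.
Qed.

End DerivedSubgroup.

Local Notation zvec n := {ffun 'I_n -> int}.

Section ExponentSums.
Variable n : nat.
Implicit Types (x : letter n) (u v w : seq (letter n)) (p : zvec n).

Definition ldeg x : zvec n := [ffun j => if x.1 == j then signz x.2 else 0].
Definition expsum w : zvec n := \sum_(x <- w) ldeg x.
Definition basisv (i : 'I_n) : zvec n := ldeg (i, false).

Lemma ldeg_linv x : ldeg (linv x) = - ldeg x.
Proof. by apply/ffunP => j; rewrite !ffunE /=; case: ifP; case: x.2; rewrite ?opprK ?oppr0. Qed.

Lemma expsum_nil : expsum [::] = 0.
Proof. exact: big_nil. Qed.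

Lemma expsum_cons x w : expsum (x :: w) = ldeg x + expsum w.
Proof. exact: big_cons. Qed.

Lemma expsum_cat u v : expsum (u ++ v) = expsum u + expsum v.
Proof. exact: big_cat. Qed.

Lemma expsum_finv u : expsum (finv u) = - expsum u.
Proof. by rewrite /expsum big_rev big_map -sumrN; apply: eq_bigr => x _; rewrite ldeg_linv. Qed.

Lemma expsum_reduce w : expsum (reduce w) = expsum w.
Proof.
elim: w => // x w IH; rewrite reduceE /= -reduceE expsum_cons -IH.
case: (reduce w) => [|y r] /=; rewrite ?expsum_cons //.
by case: eqP => [->|_]; rewrite ?expsum_cons // ldeg_linv addNKr.
Qed.

Lemma expsum_fcomm u v : expsum (fcomm u v) = 0.
Proof.
rewrite /fcomm /fmul !(expsum_reduce, expsum_cat, expsum_finv).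
by rewrite -opprD addNr.
Qed.

Lemma expsum_F1 w : F1 w -> expsum w = 0.
Proof.
elim=> [_ [u [v [_ [_ ->]]]]| |u v _ Hu _ Hv|u _ Hu].
- exact: expsum_fcomm.
- exact: expsum_nil.
- by rewrite /fmul expsum_reduce expsum_cat Hu Hv addr0.
- by rewrite expsum_finv Hu oppr0.
Qed.

Lemma netcount_expsum w i : netcount i w = expsum w i.
Proof.
rewrite /netcount /expsum sum_ffunE big_mkcond.
by apply: eq_bigr => x _; rewrite ffunE eq_sym.
Qed.

Lemma F1_reduced w : F1 w -> reduced w.
Proof.
by elim=> [_ [u [v [_ [_ ->]]]]| |u v *|u _ /reduced_finv] //; apply: reduced_reduce.
Qed.

Lemma inder_Fgrp_conj w z : inder (@Fgrp n) w -> inder (@Fgrp n) (z ++ w ++ finv z).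
Proof. by apply: inder_conj => // *; apply: reduced_reduce. Qed.

(* [w] is the product of the generators [g_i] in which [i] has net count [expsum w i]. *)
Lemma expsum0_F1 w : expsum w = 0 -> F1 (reduce w).
Proof.
move=> w0; have -> : w = wprod (fun i => [:: (i, false)]) w.
  by elim: w {w0} => //= [[i b]] w {1}->; case: b.
apply: (@inder_wprod _ (@Fgrp n)) => // [|||i].
- by move=> *; apply: reduced_reduce.
- exact: reduced_finv.
- by move=> *; apply: reduced_reduce.
- by rewrite netcount_expsum w0 ffunE.
Qed.

Lemma F1_conj u z : F1 u -> F1 (reduce (z ++ u ++ finv z)).
Proof. by move=> Hu; apply: inder_Fgrp_conj; rewrite /inder ingen_reduced // F1_reduced. Qed.

End ExponentSums.

Section LatticePaths.
Variable n : nat.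
Implicit Types (x : letter n) (w : seq (letter n)) (p : zvec n).

Definition std_word p : seq (letter n) :=
  flatten [seq nseq `|p i|%N (i, p i < 0) | i <- enum 'I_n].

Lemma expsum_nseq m x : expsum (nseq m x) = ldeg x *+ m.
Proof. by elim: m => [|m IH]; rewrite ?expsum_nil ?mulr0n //= expsum_cons IH mulrS. Qed.

Lemma expsum_flatten (ws : seq (seq (letter n))) :
  expsum (flatten ws) = \sum_(w <- ws) expsum w.
Proof. by elim: ws => [|w ws IH]; rewrite ?big_nil ?expsum_nil ?big_cons //= expsum_cat IH. Qed.

Lemma expsum_std_word p : expsum (std_word p) = p.
Proof.
rewrite /std_word expsum_flatten big_map big_enum /=.
apply/ffunP => j; rewrite sum_ffunE (bigD1 j) //= big1 ?addr0 => [|i ij].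
  rewrite expsum_nseq ffunMnE ffunE /= eqxx /signz.
  by case: (p j) => m /=; rewrite ?mulNrn ?NegzE natz.
by rewrite expsum_nseq ffunMnE ffunE /= (negbTE ij) mul0rn.
Qed.

Lemma std_word0 : std_word 0 = [::].
Proof. by rewrite /std_word; elim: (enum 'I_n) => //= i s ->; rewrite ffunE. Qed.

(* The element [std_word p * g_i * (std_word (p + e_i))^-1] of [F^(1)] attached to the edge
   from [p] to [p + e_i] of the Cayley graph of [Z^n]. *)
Definition edge_loop (k : zvec n * 'I_n) : seq (letter n) :=
  std_word k.1 ++ [:: (k.2, false)] ++ finv (std_word (k.1 + basisv k.2)).

Lemma expsum_edge_loop k : expsum (edge_loop k) = 0.
Proof.
rewrite /edge_loop !expsum_cat expsum_finv !expsum_std_word expsum_cons expsum_nil addr0.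
by rewrite addrA subrr.
Qed.

(* The edge crossed by the letter [x] read at [p], named by its lower end; the sign
   [true] records that it is crossed backwards. *)
Definition edge_of p x : (zvec n * 'I_n) * bool :=
  if x.2 then ((p - basisv x.1, x.1), true) else ((p, x.1), false).

Fixpoint path_edges w p : seq ((zvec n * 'I_n) * bool) :=
  if w is x :: w' then edge_of p x :: path_edges w' (p + ldeg x) else [::].

Lemma wprod_path_edges w p :
  weq (wprod edge_loop (path_edges w p)) (std_word p ++ w ++ finv (std_word (p + expsum w))).
Proof.
elim: w p => [|[i b] w IH] p /=.
  by rewrite expsum_nil addr0 /weq reduce_catV.
rewrite wprod_cons IH expsum_cons addrA.
case: b => /=; rewrite /wpow /edge_loop /edge_of /=.
- rewrite !finv_cat finv_cons finvK -/(basisv i) subrK -!catA.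
  suff -> : ldeg (i, true) = - basisv i by rewrite weq_Vcat.
  exact: (ldeg_linv (i, false)).
- by rewrite -!catA cat_cons -/(basisv i) weq_Vcat.
Qed.

Lemma F2_of_netcount0 w : reduced w -> expsum w = 0 ->
  (forall k, netcount k (path_edges w 0) = 0) -> F2 w.
Proof.
move=> wred w0 net0.
have : inder (@F1 n) (wprod edge_loop (path_edges w 0)).
  apply: inder_wprod net0 => [|||||k].
  - exact: F1_reduced.
  - exact: fgen_one.
  - exact: fgen_mul.
  - exact: fgen_inv.
  - exact: F1_conj.
  - by apply: expsum0_F1; apply: expsum_edge_loop.
move/(ingen_weq (wprod_path_edges w 0)).
by rewrite w0 addr0 std_word0 cats0 /inder ingen_reduced.
Qed.

End LatticePaths.

Section LowerTriangular.
Variable R : fieldType.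
Implicit Types a c : R.

Definition lowtri a c : 'M[R]_2 :=
  \matrix_(i, j) if i == 0 then (if j == 0 then a else 0) else (if j == 0 then c else a^-1).

Lemma mx2_eq (M N : 'M[R]_2) :
  M 0 0 = N 0 0 -> M 0 1 = N 0 1 -> M 1 0 = N 1 0 -> M 1 1 = N 1 1 -> M = N.
Proof.
move=> E00 E01 E10 E11; apply/matrixP => i j.
have ord2 (k : 'I_2) : k = 0 \/ k = 1 by case: k => [[|[|//]] ?]; [left | right]; apply: val_inj.
by case: (ord2 i) => ->; case: (ord2 j) => ->.
Qed.

Lemma lowtri_mul a c a' c' :
  lowtri a c *m lowtri a' c' = lowtri (a * a') (c * a' + a^-1 * c').
Proof.
by apply: mx2_eq; rewrite !mxE big_ord_recl big_ord1 !mxE /= ?invfM; ring.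
Qed.

Lemma lowtri1 : lowtri 1 0 = 1%:M.
Proof. by apply: mx2_eq; rewrite !mxE /= ?invr1. Qed.

Lemma lowtri_inv a c : a != 0 -> invmx (lowtri a c) = lowtri a^-1 (- c).
Proof.
move=> a0; have inv1 : lowtri a c *m lowtri a^-1 (- c) = 1%:M.
  by rewrite lowtri_mul mulfV // -lowtri1; congr lowtri; ring.
have [unit_a _] := mulmx1_unit inv1.
by rewrite -[RHS]mul1mx -(mulVmx unit_a) -mulmxA inv1 mulmx1.
Qed.

End LowerTriangular.

Section Monomials.
Variable n : nat.
Implicit Types (p q : zvec n) (x : letter n).

Lemma tvar_neq0 (i : 'I_n) : tvar i != 0.
Proof.
rewrite /tvar /tofr tofrac_eq0; apply/eqP => X0.
by have := @mcoeffX n int U_(i)%MM U_(i)%MM; rewrite X0 mcoeff0 eqxx.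
Qed.

Definition mon p : Frac n := \prod_(i < n) tvar i ^ p i.

Lemma monD p q : mon (p + q) = mon p * mon q.
Proof.
rewrite /mon -big_split; apply: eq_bigr => i _.
by rewrite ffunE exprzDr // unitfE tvar_neq0.
Qed.

Lemma mon0 : mon 0 = 1.
Proof. by rewrite /mon big1 // => i _; rewrite ffunE expr0z. Qed.

Lemma mon_neq0 p : mon p != 0.
Proof. by apply/prodf_neq0 => i _; rewrite expfz_neq0 // tvar_neq0. Qed.

Lemma monN p : mon (- p) = (mon p)^-1.
Proof. by apply: (mulfI (mon_neq0 p)); rewrite -monD subrr mon0 mulfV // mon_neq0. Qed.

Lemma monMn p k : mon (p *+ k) = mon p ^+ k.
Proof. by elim: k => [|k IH]; rewrite ?mulr0n ?mon0 // mulrS monD IH exprS. Qed.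

Lemma mon_ldeg x : mon (ldeg x) = if x.2 then (tvar x.1)^-1 else tvar x.1.
Proof.
rewrite /mon (bigD1 x.1) //= big1 ?mulr1 => [|j j1]; last first.
  by rewrite ffunE eq_sym (negbTE j1) expr0z.
by rewrite ffunE eqxx; case: x.2; rewrite ?expr1z // invr_expz expr1z.
Qed.

Definition signed_sum (K : Type) (f : K -> zvec n) (s : seq (K * bool)) : Frac n :=
  \sum_(e <- s) (signz e.2)%:~R * mon (f e.1).

Lemma mu1_letter_lowtri x : mu1_letter x = lowtri (mon (ldeg x)) (signz x.2)%:~R.
Proof.
have gen : mu1_gen x.1 = lowtri (tvar x.1) 1.
  by apply: mx2_eq; rewrite !mxE.
rewrite /mu1_letter mon_ldeg gen; case: x.2 => //=.
by rewrite lowtri_inv ?tvar_neq0.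
Qed.

Lemma lower_unip_lowtri (L : Frac n) : lower_unip L = lowtri 1 L.
Proof. by apply: mx2_eq; rewrite !mxE /= ?invr1. Qed.

(* Exponent of the monomial contributed by the lattice edge from [p] to [p + e_i]. *)
Definition edge_exp (k : zvec n * 'I_n) : zvec n := - (k.1 *+ 2) - basisv k.2.

Lemma edge_exp_of p x : edge_exp (edge_of p x).1 = - ((p + ldeg x) *+ 2) + ldeg x.
Proof.
rewrite /edge_exp /edge_of /basisv; case: x => i [] /=; apply/ffunP => j;
  rewrite !(ffunE, ffunMnE) /=; case: (i == j) => /=; lia.
Qed.

Lemma edge_exp_inj : injective edge_exp.
Proof.
move=> [q i] [q' i'] /ffunP qq'.
have coord j : q j *+ 2 + (i == j)%:Z = q' j *+ 2 + (i' == j)%:Z.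
  move: (qq' j); rewrite /edge_exp /basisv /ldeg !(ffunE, ffunMnE) /=.
  by case: (i == j); case: (i' == j) => /=; lia.
have ii' : i = i'.
  by apply/eqP/negPn/negP => ii'; move: (coord i); rewrite eqxx eq_sym (negbTE ii') /=; lia.
subst i'; congr pair; apply/ffunP => j; move: (coord j); case: (i == j) => /=; lia.
Qed.

(* Stated over an abstract field: [field] is impractically slow on [Frac n]. *)
Lemma lowtri_cons_entry (R : fieldType) (s u M A S : R) : u != 0 -> M != 0 ->
  s * A + u^-1 * (A * (M * u) ^+ 2 * S) =
  u * A * M ^+ 2 * (s * (((M * u) ^+ 2)^-1 * u) + S).
Proof. by move=> u0 M0; field; rewrite u0 M0. Qed.

Lemma mu1_lowtri w p :
  mu1 w = lowtri (mon (expsum w))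
                 (mon (expsum w) * mon (p *+ 2) * signed_sum edge_exp (path_edges w p)).
Proof.
elim: w p => [|x w IH] p.
  by rewrite expsum_nil mon0 /signed_sum big_nil mulr0 lowtri1.
rewrite [mu1 _]/= -/(mu1 w) mu1_letter_lowtri (IH (p + ldeg x)) lowtri_mul.
rewrite expsum_cons monD /signed_sum big_cons -/(signed_sum _ _) edge_exp_of; congr lowtri.
have -> : (edge_of p x).2 = x.2 by rewrite /edge_of; case: x.2.
rewrite [mon (_ *- 2 + _)]monD monN !monMn monD.
by apply: lowtri_cons_entry; rewrite ?mon_neq0.
Qed.

End Monomials.

Section SignedSums.
Variable n : nat.

Definition mnm_of (v : zvec n) : 'X_{1..n} := [multinom `|v i|%N | i < n].

Lemma mon_ge0 (v : zvec n) : (forall i, 0 <= v i) -> mon v = tofr 'X_[mnm_of v].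
Proof.
move=> v0; rewrite /mon /tofr mpolyXE_id rmorph_prod; apply: eq_bigr => i _.
by rewrite rmorphXn mnmE -[v i](gez0_abs (v0 i)).
Qed.

Lemma mnm_of_inj (v v' : zvec n) : (forall i, 0 <= v i) -> (forall i, 0 <= v' i) ->
  mnm_of v = mnm_of v' -> v = v'.
Proof.
move=> v0 v'0 vv'; apply/ffunP => i.
have := congr1 (fun m : 'X_{1..n} => m i) vv'; rewrite !mnmE.
by move: (v0 i) (v'0 i); move: (v i) (v' i) => a b; lia.
Qed.

Variables (K : eqType) (f : K -> zvec n) (s : seq (K * bool)).

(* Multiplying by [(t_1 ... t_n)^bound] clears all negative exponents occurring in the sum. *)
Definition sum_bound : nat := \sum_(e <- s) \sum_(i < n) `|f e.1 i|%N.
Definition shiftv : zvec n := [ffun _ => sum_bound%:Z].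
Definition shifted_poly : {mpoly int[n]} :=
  \sum_(e <- s) (signz e.2)%:~R * 'X_[mnm_of (f e.1 + shiftv)].

Lemma shiftv_ge0 e i : e \in s -> 0 <= (f e.1 + shiftv) i.
Proof.
move=> es; have : (`|f e.1 i| <= sum_bound)%N.
  by rewrite /sum_bound (big_rem e) //= (bigD1 i) //= -addnA leq_addr.
by rewrite !ffunE; move: (f e.1 i) => z; lia.
Qed.

Lemma signed_sum_shift :
  signed_sum f s * (\prod_(i < n) tvar i) ^+ sum_bound = tofr shifted_poly.
Proof.
have -> : (\prod_(i < n) tvar i) ^+ sum_bound = mon shiftv.
  by rewrite /mon -prodrXl; apply: eq_bigr => i _; rewrite ffunE.
rewrite /signed_sum /shifted_poly mulr_suml /tofr rmorph_sum big_seq [RHS]big_seq.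
apply: eq_bigr => e es; rewrite rmorphM rmorph_int -mulrA -monD.
by rewrite mon_ge0 // => i; apply: shiftv_ge0.
Qed.

Lemma laurent_signed_sum : laurent (signed_sum f s).
Proof. by exists shifted_poly, sum_bound; apply: signed_sum_shift. Qed.

(* The coefficient of [X^(f k + shiftv)] in [shifted_poly] is the net count of [k]. *)
Lemma signed_sum_eq0 : injective f -> signed_sum f s = 0 -> forall k, netcount k s = 0.
Proof.
move=> f_inj sum0 k.
have [|notin] := boolP (has (fun e : K * bool => e.1 == k) s); last first.
  rewrite /netcount big_seq_cond big1 // => e /andP[es ek].
  by move/hasPn: notin => /(_ e es); rewrite ek.
case/hasP=> e0 e0s /eqP e0k.
have poly0 : shifted_poly = 0.
  by apply/eqP; rewrite -tofrac_eq0 -/(tofr _) -signed_sum_shift sum0 mul0r.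
have := congr1 (mcoeff (mnm_of (f k + shiftv))) poly0.
rewrite mcoeff0 raddf_sum /= => <-.
rewrite /netcount big_mkcond /= big_seq [RHS]big_seq.
apply: eq_bigr => e es; rewrite mulrzl raddfMz [X in X *~ _]/= mcoeffX.
have -> : (mnm_of (f e.1 + shiftv) == mnm_of (f k + shiftv)) = (e.1 == k).
  apply/eqP/eqP => [|-> //] /mnm_of_inj ek.
  apply/f_inj/(addIr shiftv)/ek => i; first exact: shiftv_ge0.
  by rewrite -e0k; apply: shiftv_ge0.
by case: (e.1 == k); rewrite ?mul0rz //; case: (e.2).
Qed.

End SignedSums.

Theorem lemma5p1 (n : nat) (hn : (2 <= n)%N) (w : seq (letter n)) :
  reduced w -> F1 w -> ~ F2 w ->
  exists L : Frac n, laurent L /\ L != 0 /\ mu1 w = lower_unip L.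
Proof.
move=> wred wF1 wF2; have w0 := expsum_F1 wF1.
exists (signed_sum (@edge_exp n) (path_edges w 0)); split; [|split].
- exact: laurent_signed_sum.
- apply/eqP => /(signed_sum_eq0 (@edge_exp_inj n)) net0.
  exact/wF2/F2_of_netcount0.
- by rewrite (mu1_lowtri w 0) w0 mul0rn mon0 !mul1r lower_unip_lowtri.
Qed.
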